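(* Fix a client $D_j$ and let the random variables $Z_1,\dots,Z_{k/\epsilon}$ be as described in the context. Then for every $\ell\in[k]$, every $t\in[\ell-1]$ and every $r\in\{(\ell-1)/\epsilon+1,\dots,\ell/\epsilon\}$, $$H_r(t-1):=\Pr\Big[\sum_{r'=1}^{r-1}Z_{r'}\le t-1 \;\Big|\; Z_r=1\Big]\;\le\; e^{-r\epsilon}\left(\frac{e\, r\,\epsilon}{t}\right)^t.$$
   Context: Instance: clients $D_1,\dots,D_n$, facilities $F_1,\dots,F_m$, nonnegative costs $c_{i,j}$, integer $k\le m$, harmonic weights $w_\ell=1/\ell$ ($\ell\in[k]$). Consider the linear program: minimize $\sum_{j=1}^n\sum_{\ell=1}^k\sum_{i=1}^m w_\ell x^\ell_{ij}c_{ij}$ subject to $\sum_{i=1}^m y_i=k$; $\sum_{\ell=1}^k x^\ell_{ij}\le y_i$ for all $i\in[m],j\in[n]$; $\sum_{i=1}^m x^\ell_{ij}\ge 1$ for all $j\in[n],\ell\in[k]$; $y_i,x^\ell_{ij}\in[0,1]$. Let $(x^*,y^* )$ be an optimal (rational) solution. Dependent rounding (DR) with a fixed tournament tree: fix a rooted binary tree with $m$ leaves, leaf $i$ holding variable $y_i$ initialized to $y^*_i$; repeatedly take two nonempty sibling nodes whose parent is empty. If both hold fractional variables $y_a,y_b$ with $s=y_a+y_b$: if $s\le 1$, with probability $y_a/s$ set $(y_a,y_b)\leftarrow(s,0)$, otherwise $(0,s)$; if $s>1$, with probability $(1-y_b)/(2-s)$ set $(y_a,y_b)\leftarrow(1,s-1)$,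 otherwise $(s-1,1)$. A variable that is still fractional is promoted to the parent; if both became integral a dummy $\bot$ is promoted; if one node holds $\bot$ (or an already integral variable), the other node's content is promoted unchanged. At the end all variables are in $\{0,1\}$; let $Y_i$ be the final value of $y_i$. Now fix the client $D_j$ and renumber facilities so that $c_{1,j}\le c_{2,j}\le\dots\le c_{m,j}$ (ties broken arbitrarily but fixed). Fix $\epsilon>0$ such that $1/\epsilon$ and all $y^*_i/\epsilon$ are integers. Let $\mathrm{submax}(0)=0$, $\mathrm{submax}(i)=\mathrm{submax}(i-1)+y^*_i/\epsilon$, and $\mathrm{sub}(i)=\{\mathrm{submax}(i-1)+1,\dots,\mathrm{submax}(i)\}$, so $\{1,\dots,k/\epsilon\}$ is partitioned into the blocks $\mathrm{sub}(i)$. Define $Z_1,\dots,Z_{k/\epsilon}\in\{0,1\}$ as follows: for each $i$ with $Y_i=1$, independently of everything else choose one index $r\in\mathrm{sub}(i)$ uniformly at random and set $Z_r=1$; all other $Z_r$ are $0$. Thus $Y_i=\sum_{r\in\mathrm{sub}(i)}Z_r$ and $\Pr[Z_r=1]=\epsilon$ for all $r$. *)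

From HB Require Import structures.
From mathcomp Require Import all_boot all_order all_algebra all_fingroup.
From mathcomp Require Import reals sequences exp.
Set Implicit Arguments. Unset Strict Implicit. Unset Printing Implicit Defensive.
Import Order.TTheory GRing.Theory Num.Theory.
Local Open Scope ring_scope.

Section Defs.
Variable R : realType.

(** Finite discrete distributions: lists of (weight, outcome). *)
Definition dist (T : Type) := seq (R * T).
Definition dret (T : Type) (x : T) : dist T := [:: (1, x)].
Definition dbind (T U : Type) (d : dist T) (f : T -> dist U) : dist U :=
  flatten [seq [seq (p.1 * q.1, q.2) | q <- f p.2] | p <- d].
Definition prob (T : Type) (d : dist T) (P : T -> bool) : R :=
  \sum_(p <- d) (if P p.2 then p.1 else 0).
Definition condprob (T : Type) (d : dist T) (A B : T -> bool) : R :=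
  prob d (fun w => A w && B w) / prob d B.

(** The LP relaxation (facilities 'I_m, clients 'I_n, levels 'I_k,
    level l : 'I_k stands for ell = l+1, with weight 1/ell). *)
Definition lp_feasible (m n k : nat) (x : 'I_k -> 'I_m -> 'I_n -> R)
    (y : 'I_m -> R) : Prop :=
  [/\ \sum_(i < m) y i = k%:R,
      (forall i j, \sum_(l < k) x l i j <= y i),
      (forall j l, 1 <= \sum_(i < m) x l i j),
      (forall i, 0 <= y i <= 1) &
      (forall l i j, 0 <= x l i j <= 1)].

Definition lp_obj (m n k : nat) (c : 'I_m -> 'I_n -> R)
    (x : 'I_k -> 'I_m -> 'I_n -> R) : R :=
  \sum_(j < n) \sum_(l < k) \sum_(i < m) ((l.+1)%:R)^-1 * x l i j * c i j.

Definition lp_optimal (m n k : nat) (c : 'I_m -> 'I_n -> R)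
    (x : 'I_k -> 'I_m -> 'I_n -> R) (y : 'I_m -> R) : Prop :=
  lp_feasible x y /\
  forall (x' : 'I_k -> 'I_m -> 'I_n -> R) (y' : 'I_m -> R), lp_feasible x' y' -> lp_obj c x <= lp_obj c x'.

(** Dependent rounding with a fixed tournament tree. *)
Inductive btree (m : nat) : Type :=
  | BLeaf of 'I_m
  | BNode of btree m & btree m.

Fixpoint leaves (m : nat) (T : btree m) : seq 'I_m :=
  match T with
  | BLeaf i => [:: i]
  | BNode l r => leaves l ++ leaves r
  end.

Definition frac (v : R) : bool := (0 < v) && (v < 1).

(* a node content: Some a = the fractional variable y_a; None = bot
   (or an already integral variable, which behaves the same way) *)
Definition promote (m : nat) (y : 'I_m -> R) (a b : 'I_m) : option 'I_m :=
  if frac (y a) then Some a else if frac (y b) then Some b else None.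

Definition upd2 (m : nat) (y : 'I_m -> R) (a : 'I_m) (va : R) (b : 'I_m) (vb : R)
  : 'I_m -> R :=
  fun i => if i == a then va else if i == b then vb else y i.

Definition dr_merge (m : nat) (y : 'I_m -> R) (ca cb : option 'I_m)
  : dist (('I_m -> R) * option 'I_m) :=
  match ca, cb with
  | Some a, Some b =>
      let s := y a + y b in
      if s <= 1 then
        let y1 := upd2 y a s b 0 in
        let y2 := upd2 y a 0 b s in
        [:: (y a / s, (y1, promote y1 a b)); (1 - y a / s, (y2, promote y2 a b))]
      else
        let y1 := upd2 y a 1 b (s - 1) in
        let y2 := upd2 y a (s - 1) b 1 in
        [:: ((1 - y b) / (2 - s), (y1, promote y1 a b));
            (1 - (1 - y b) / (2 - s), (y2, promote y2 a b))]
  | Some a, None => dret (y, Some a)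
  | None, Some b => dret (y, Some b)
  | None, None => dret (y, None)
  end.

(* Subtrees act on disjoint variables with independent randomness, so
   processing the left subtree, then the right one, then merging at the
   root yields the distribution of the DR process. *)
Fixpoint dr (m : nat) (T : btree m) (y : 'I_m -> R)
  : dist (('I_m -> R) * option 'I_m) :=
  match T with
  | BLeaf i => dret (y, if frac (y i) then Some i else None)
  | BNode l r =>
      dbind (dr l y) (fun p =>
      dbind (dr r p.1) (fun q => dr_merge q.1 p.2 q.2))
  end.

(** Blocks sub(i) for client ordering sigma (position p holds facility
    sigma p, 0-based), with y*_i / eps = nn i. Indices r are 1-based. *)
Definition sub_block (m : nat) (sigma : {perm 'I_m}) (nn : 'I_m -> nat)
    (i : 'I_m) : seq nat :=
  iota (\sum_(q < m | (q < (sigma^-1)%g i)%N) nn (sigma q)).+1 (nn i).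

(** Distribution of the set of indices r with Z_r = 1, given final Y:
    for each i with Y_i = 1, an independent uniform r in sub(i). *)
Definition zdist (m : nat) (sigma : {perm 'I_m}) (nn : 'I_m -> nat)
    (Y : 'I_m -> R) : dist (seq nat) :=
  foldr (fun i d =>
           if Y i == 1 then
             dbind d (fun s => [seq (((nn i)%:R)^-1, r :: s) | r <- sub_block sigma nn i])
           else d)
        (dret [::]) (enum 'I_m).

Definition Zdist (m : nat) (T : btree m) (ystar : 'I_m -> R)
    (sigma : {perm 'I_m}) (nn : 'I_m -> nat) : dist (seq nat) :=
  dbind (dr T ystar) (fun p => zdist sigma nn p.1).

Definition Zv (r : nat) (s : seq nat) : nat := (r \in s).

End Defs.

From Pilot Require Import Defs.
From HB Require Import structures.
From mathcomp Require Import all_boot all_order all_algebra all_fingroup.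
From mathcomp Require Import reals sequences exp.
From mathcomp Require Import ring lra zify.
From Stdlib Require List.
Import Order.TTheory GRing.Theory Num.Theory.
Local Open Scope ring_scope.
Set Implicit Arguments. Unset Strict Implicit. Unset Printing Implicit Defensive.

(* Let sub(i) be the block containing r and S the facilities preceding i in the
   client's order.  Given Z_r = 1 we have Y_i = 1, and the prefix sum
   sum_{r' < r} Z_r' is at least the number of opened facilities of S.
   One DR step on a pair of fractional values preserves their sum and is a
   martingale in each coordinate; hence the expectation of a product of
   one-variable factors taken from 1, 1 - w v and
   cap_w v = min (v (1 - w v) / (1 - w), 1) (concave, cap_w 0 = 0, cap_w 1 = 1),
   with at most one cap factor, does not increase along DR.  Taking w = 1 - q
   with q = t / mu, where mu = eps * (last index of sub(i)), the event
   {Y_i = 1, at most t - 1 opened facilities in S} weighted by q^(t-1) lies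
   below cap_w(Y_i) prod_{a in S} (1 - w Y_a), whose value at y* is at most
   q^(t-1) y*_i e^-mu (e mu / t)^t.  Since Pr[Z_r = 1] = E[Y_i] / |sub(i)| and
   E[Y_i] >= y*_i, dividing gives the bound at mu, and x |-> e^-x (e x / t)^t
   is nonincreasing for x >= t, with t <= r eps <= mu. *)

Lemma Forall_mem (T : eqType) (P : T -> Prop) (s : seq T) :
  (forall x, x \in s -> P x) -> List.Forall P s.
Proof.
elim: s => [|x s IH] H; constructor; first by apply: H; rewrite mem_head.
by apply: IH => y ys; apply: H; rewrite in_cons ys orbT.
Qed.

Section FiniteDistributions.
Variable R : realType.

Definition expect (T : Type) (d : dist R T) (f : T -> R) : R :=
  \sum_(p <- d) p.1 * f p.2.

Lemma Forall_dbind T U (d : dist R T) (f : T -> dist R U) (P : R * U -> Prop) :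
  List.Forall (fun p => List.Forall (fun q => P (p.1 * q.1, q.2)) (f p.2)) d ->
  List.Forall P (dbind d f).
Proof.
move=> H; apply/List.Forall_concat/List.Forall_map.
by apply: List.Forall_impl H => p /List.Forall_map.
Qed.

Lemma expect_ret T (x : T) f : expect (dret R x) f = f x.
Proof. by rewrite /expect big_seq1 mul1r. Qed.

Lemma expect_bind T U (d : dist R T) (f : T -> dist R U) g :
  expect (dbind d f) g = expect d (fun x => expect (f x) g).
Proof.
rewrite /expect big_flatten big_map; apply: eq_bigr => p _.
by rewrite big_map mulr_sumr; apply: eq_bigr => q _; rewrite mulrA.
Qed.

Lemma eq_expect T (d : dist R T) f g : (forall x, f x = g x) ->
  expect d f = expect d g.
Proof. by move=> fg; apply: eq_bigr => p _; rewrite fg. Qed.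

Lemma eq_expect_supp T (d : dist R T) f g :
  List.Forall (fun p => f p.2 = g p.2) d -> expect d f = expect d g.
Proof.
by elim=> [|p d' fg _ IH]; rewrite /expect ?big_nil // !big_cons fg; congr (_ + _).
Qed.

Lemma ler_expect T (d : dist R T) f g :
  List.Forall (fun p => 0 <= p.1 /\ f p.2 <= g p.2) d -> expect d f <= expect d g.
Proof.
elim=> [|p d' [p0 fg] _ IH]; rewrite /expect ?big_nil // !big_cons.
by rewrite lerD // ler_wpM2l.
Qed.

Lemma expectZ T (d : dist R T) f a :
  expect d (fun x => a * f x) = a * expect d f.
Proof. by rewrite /expect mulr_sumr; apply: eq_bigr => p _; rewrite mulrCA. Qed.

Lemma expectD T (d : dist R T) f g :
  expect d (fun x => f x + g x) = expect d f + expect d g.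
Proof. by rewrite /expect -big_split; apply: eq_bigr => p _; rewrite mulrDr. Qed.

Lemma expectB T (d : dist R T) f g :
  expect d (fun x => f x - g x) = expect d f - expect d g.
Proof. by rewrite /expect -sumrB; apply: eq_bigr => p _; rewrite mulrBr. Qed.

Lemma prob_expect T (d : dist R T) (P : pred T) :
  prob d P = expect d (fun x => (P x)%:R).
Proof. by apply: eq_bigr => p _; case: (P p.2); rewrite ?mulr1 ?mulr0. Qed.

End FiniteDistributions.

Section Concavity.
Variable R : realType.
Implicit Types (f g : R -> R) (w : R).

Definition concave f := forall p a b, 0 <= p <= 1 ->
  p * f a + (1 - p) * f b <= f (p * a + (1 - p) * b).

Definition lin w (v : R) := 1 - w * v.
Definition quad w (v : R) := v * lin w v / (1 - w).
Definition cap w (v : R) := Num.min (quad w v) 1.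

Lemma cap1 w : w < 1 -> cap w 1 = 1.
Proof.
by move=> w1; rewrite /cap /quad /lin mulr1 mul1r divff ?minxx // subr_eq0 gt_eqF.
Qed.

Lemma concave_const c : concave (fun=> c).
Proof. by move=> p a b _; lra. Qed.

Lemma concave_lin w : concave (lin w).
Proof. by move=> p a b _; rewrite /lin; lra. Qed.

Lemma concaveMr f c : 0 <= c -> concave f -> concave (fun v => f v * c).
Proof.
move=> c0 cf p a b p01; rewrite !mulrA -mulrDl.
exact: ler_wpM2r (cf p a b p01).
Qed.

Lemma concave_min f g : concave f -> concave g ->
  concave (fun v => Num.min (f v) (g v)).
Proof.
move=> cf cg p a b /andP[p0 p1]; have p01 : 0 <= p <= 1 by rewrite p0 p1.
have q0 : 0 <= 1 - p by rewrite subr_ge0.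
rewrite le_min; apply/andP; split.
- apply: le_trans (cf p a b p01); apply: lerD; apply: ler_wpM2l => //;
  by rewrite ge_min lexx.
- apply: le_trans (cg p a b p01); apply: lerD; apply: ler_wpM2l => //;
  by rewrite ge_min lexx orbT.
Qed.

Lemma concave_quadratic w : 0 <= w -> concave (fun v => v * lin w v).
Proof.
move=> w0 p a b /andP[p0 p1]; rewrite /lin.
have : 0 <= w * (p * (1 - p)) * (a - b) ^+ 2.
  by rewrite mulr_ge0 ?sqr_ge0 // mulr_ge0 // mulr_ge0 // subr_ge0.
lra.
Qed.

Lemma concave_cap w : 0 <= w < 1 -> concave (cap w).
Proof.
move=> /andP[w0 w1]; apply: concave_min (concave_const 1).
by apply: concaveMr (concave_quadratic w0); rewrite invr_ge0 subr_ge0 ltW.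
Qed.

End Concavity.

Section PairRounding.
Variable R : realType.
Implicit Types (x y w B : R) (f g : R -> R -> R).

Definition pair_mean x y f : R :=
  if x + y <= 1 then x / (x + y) * f (x + y) 0 + (1 - x / (x + y)) * f 0 (x + y)
  else (1 - y) / (2 - (x + y)) * f 1 (x + y - 1)
       + (1 - (1 - y) / (2 - (x + y))) * f (x + y - 1) 1.

Lemma eq_pair_mean x y f g : (forall u v, f u v = g u v) ->
  pair_mean x y f = pair_mean x y g.
Proof. by move=> fg; rewrite /pair_mean !fg. Qed.

Lemma pair_meanMr x y f K :
  pair_mean x y (fun u v => f u v * K) = pair_mean x y f * K.
Proof. by rewrite /pair_mean; case: ifP => _; ring. Qed.

Lemma pair_meanC x y f : Defs.frac x -> Defs.frac y ->
  pair_mean x y f = pair_mean y x (fun u v => f v u).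
Proof.
move=> /andP[x0 x1] /andP[y0 y1]; rewrite /pair_mean [y + x]addrC.
case: ifP => _.
  have s0 : x + y != 0 by rewrite gt_eqF // addr_gt0.
  have -> : 1 - x / (x + y) = y / (x + y) by field.
  have -> : 1 - y / (x + y) = x / (x + y) by field.
  exact: addrC.
have s0 : 2 - (x + y) != 0 by rewrite gt_eqF //; lra.
have -> : 1 - (1 - y) / (2 - (x + y)) = (1 - x) / (2 - (x + y)) by field.
have -> : 1 - (1 - x) / (2 - (x + y)) = (1 - y) / (2 - (x + y)) by field.
exact: addrC.
Qed.

Lemma pair_weights x y : Defs.frac x -> Defs.frac y ->
  0 <= x / (x + y) <= 1 /\ 0 <= (1 - y) / (2 - (x + y)) <= 1.
Proof.
move=> /andP[x0 x1] /andP[y0 y1].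
have s0 : 0 < x + y by lra.
have s1 : 0 < 2 - (x + y) by lra.
split; apply/andP; split; try by apply: divr_ge0; lra.
  by rewrite ler_pdivrMr // mul1r; lra.
by rewrite ler_pdivrMr // mul1r; lra.
Qed.

Lemma pair_mean_le x y f B : Defs.frac x -> Defs.frac y ->
  (forall p, 0 <= p <= 1 -> p * (x + y) = x -> x + y <= 1 ->
     p * f (x + y) 0 + (1 - p) * f 0 (x + y) <= B) ->
  (forall p, 0 <= p <= 1 -> p * (2 - (x + y)) = 1 - y -> 1 < x + y ->
     p * f 1 (x + y - 1) + (1 - p) * f (x + y - 1) 1 <= B) ->
  pair_mean x y f <= B.
Proof.
move=> fx fy low high; have [p01 q01] := pair_weights fx fy.
have [x0 x1] := andP fx; have [y0 y1] := andP fy.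
rewrite /pair_mean; case: ifPn => [hs|]; [apply: low | rewrite -ltNge; apply: high] => //.
  by rewrite mulfVK // gt_eqF //; lra.
by rewrite mulfVK // gt_eqF //; lra.
Qed.

Lemma ler_pair_mean x y f g : Defs.frac x -> Defs.frac y ->
  (forall u v, 0 <= u <= 1 -> 0 <= v <= 1 -> f u v <= g u v) ->
  pair_mean x y f <= pair_mean x y g.
Proof.
move=> fx fy fg; have [x0 x1] := andP fx; have [y0 y1] := andP fy.
apply: pair_mean_le => // p /andP[p0 p1] hp hs; rewrite /pair_mean.
- have s0 : x + y != 0 by rewrite gt_eqF // addr_gt0.
  have -> : x / (x + y) = p by apply: (mulIf s0); rewrite divfK.
  by rewrite hs; apply: lerD; apply: ler_wpM2l; rewrite ?subr_ge0 // fg //; lra.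
- have s0 : 2 - (x + y) != 0 by rewrite gt_eqF //; lra.
  have -> : (1 - y) / (2 - (x + y)) = p by apply: (mulIf s0); rewrite divfK.
  have -> : (x + y <= 1) = false by rewrite leNgt hs.
  by apply: lerD; apply: ler_wpM2l; rewrite ?subr_ge0 // fg //; lra.
Qed.

Lemma pair_mean_concave x y (h : R -> R) : Defs.frac x -> Defs.frac y ->
  concave h -> pair_mean x y (fun u _ => h u) <= h x.
Proof.
move=> fx fy ch; apply: pair_mean_le => // p p01 hp _.
  by have := ch p (x + y) 0 p01; rewrite mulr0 addr0 hp.
have ex : p * 1 + (1 - p) * (x + y - 1) = x by lra.
by have := ch p 1 (x + y - 1) p01; rewrite ex.
Qed.

Lemma pair_mean_linM x y w : Defs.frac x -> Defs.frac y ->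
  pair_mean x y (fun u v => lin w u * lin w v) <= lin w x * lin w y.
Proof.
move=> fx fy; have [x0 x1] := andP fx; have [y0 y1] := andP fy.
apply: pair_mean_le => // p _ _ _; rewrite /lin.
  have := mulr_ge0 (mulr_ge0 (sqr_ge0 w) (ltW x0)) (ltW y0); lra.
have x1' : 0 <= 1 - x by rewrite subr_ge0 ltW.
have y1' : 0 <= 1 - y by rewrite subr_ge0 ltW.
have := mulr_ge0 (mulr_ge0 (sqr_ge0 w) x1') y1'; lra.
Qed.

Lemma pair_mean_quadratic_lin x y w : Defs.frac x -> Defs.frac y ->
  pair_mean x y (fun u v => u * lin w u * lin w v) <= x * lin w x * lin w y.
Proof.
move=> fx fy; have [x0 x1] := andP fx; have [y0 y1] := andP fy.
apply: pair_mean_le => // p _ hp _.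
  have e : p * (x + y) * lin w (x + y) = x * lin w (x + y) by rewrite hp.
  have := mulr_ge0 (ltW x0) (mulr_ge0 (mulr_ge0 (sqr_ge0 w) (ltW x0)) (ltW y0)).
  move: e; rewrite /lin; lra.
have ex : p + (1 - p) * (x + y - 1) = x by lra.
have -> : p * (1 * lin w 1 * lin w (x + y - 1))
    + (1 - p) * ((x + y - 1) * lin w (x + y - 1) * lin w 1)
    = (p + (1 - p) * (x + y - 1)) * lin w 1 * lin w (x + y - 1) by ring.
have x1' : 0 <= 1 - x by rewrite subr_ge0 ltW.
have y1' : 0 <= 1 - y by rewrite subr_ge0 ltW.
have := mulr_ge0 (ltW x0) (mulr_ge0 (mulr_ge0 (sqr_ge0 w) x1') y1').
rewrite ex /lin; lra.
Qed.

Lemma lin_ge0 w v : 0 <= w <= 1 -> 0 <= v <= 1 -> 0 <= lin w v.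
Proof. by move=> /andP[w0 w1] /andP[v0 v1]; rewrite /lin subr_ge0 mulr_ile1. Qed.

Lemma pair_mean_cap_lin x y w : 0 <= w < 1 -> Defs.frac x -> Defs.frac y ->
  pair_mean x y (fun u v => cap w u * lin w v) <= cap w x * lin w y.
Proof.
move=> /andP[w0 w1] fx fy; have [x0 x1] := andP fx; have [y0 y1] := andP fy.
have w01 : 0 <= w <= 1 by rewrite w0 ltW.
have liny : 0 <= lin w y by rewrite lin_ge0 // (ltW y0) (ltW y1).
rewrite /cap minr_pMl // mul1r le_min; apply/andP; split.
  apply: (@le_trans _ _ (pair_mean x y (fun u v => quad w u * lin w v))).
    apply: ler_pair_mean => // u v _ v01.
    by rewrite ler_wpM2r ?lin_ge0 // ge_min lexx.
  rewrite /quad; under eq_pair_mean do rewrite mulrAC.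
  rewrite pair_meanMr mulrAC ler_wpM2r ?invr_ge0 ?subr_ge0 ?(ltW w1) //.
  exact: pair_mean_quadratic_lin.
apply: (@le_trans _ _ (pair_mean x y (fun _ v => lin w v))).
  apply: ler_pair_mean => // u v _ v01.
  by rewrite ler_piMl ?lin_ge0 // ge_min lexx orbT.
by rewrite pair_meanC //; apply: pair_mean_concave => //; exact: concave_lin.
Qed.

Inductive factor_kind := KOne | KLin | KCap.

Definition factor w k : R -> R :=
  match k with KOne => fun=> 1 | KLin => lin w | KCap => cap w end.

Lemma factor_ge0 w k v : 0 <= w < 1 -> 0 <= v <= 1 -> 0 <= factor w k v.
Proof.
move=> /andP[w0 w1] v01; have [v0 _] := andP v01.
have w01 : 0 <= w <= 1 by rewrite w0 (ltW w1).
case: k => /=; [exact: ler01 | exact: lin_ge0 |].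
rewrite /cap le_min ler01 andbT /quad divr_ge0 ?subr_ge0 ?(ltW w1) //.
by rewrite mulr_ge0 ?lin_ge0.
Qed.

Lemma concave_factor w k : 0 <= w < 1 -> concave (factor w k).
Proof.
move=> w01; case: k; [exact: concave_const | exact: concave_lin |].
exact: concave_cap.
Qed.

Lemma pair_mean_factorM w ka kb x y : 0 <= w < 1 ->
  ~ (ka = KCap /\ kb = KCap) -> Defs.frac x -> Defs.frac y ->
  pair_mean x y (fun u v => factor w ka u * factor w kb v)
    <= factor w ka x * factor w kb y.
Proof.
move=> w01 nCC fx fy.
have one_right k x' y' : Defs.frac x' -> Defs.frac y' ->
    pair_mean x' y' (fun u v => factor w k u * factor w KOne v)
      <= factor w k x' * factor w KOne y'.
  move=> fx' fy'; rewrite /= mulr1; under eq_pair_mean do rewrite mulr1.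
  exact: pair_mean_concave (concave_factor k w01).
have swap k1 k2 : pair_mean y x (fun u v => factor w k2 u * factor w k1 v)
      <= factor w k2 y * factor w k1 x ->
    pair_mean x y (fun u v => factor w k1 u * factor w k2 v)
      <= factor w k1 x * factor w k2 y.
  by rewrite pair_meanC // mulrC; under eq_pair_mean do rewrite mulrC.
case: kb nCC => [_|_|nCC]; first exact: one_right.
  case: ka; [by apply: swap; apply: one_right | exact: pair_mean_linM |].
  exact: pair_mean_cap_lin.
case: ka nCC => [_|_|nCC]; last by exfalso; apply: nCC.
  by apply: swap; apply: one_right.
by apply: swap; exact: pair_mean_cap_lin.
Qed.

End PairRounding.

Section DependentRounding.
Variables (R : realType) (m : nat).
Implicit Types (y : 'I_m -> R) (a b j : 'I_m).

Lemma upd2_first y a va b vb : upd2 y a va b vb a = va.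
Proof. by rewrite /upd2 eqxx. Qed.

Lemma upd2_second y a va b vb : a != b -> upd2 y a va b vb b = vb.
Proof. by rewrite /upd2 eq_sym => /negbTE ->; rewrite eqxx. Qed.

Lemma upd2_other y a va b vb j : j != a -> j != b -> upd2 y a va b vb j = y j.
Proof. by rewrite /upd2 => /negbTE -> /negbTE ->. Qed.

Lemma bigD2 (T : Type) (idx : T) (op : Monoid.com_law idx) (F : 'I_m -> T) a b :
  a != b ->
  \big[op/idx]_j F j = op (op (F a) (F b)) (\big[op/idx]_(j | (j != a) && (j != b)) F j).
Proof.
move=> ab; rewrite (bigD1 a) //= (bigD1 b) /=; last by rewrite eq_sym.
by rewrite Monoid.mulmA.
Qed.

Lemma big_upd2 (T : Type) (idx : T) (op : Monoid.com_law idx) (F : 'I_m -> R -> T)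
    y a va b vb : a != b ->
  \big[op/idx]_j F j (upd2 y a va b vb j)
    = op (op (F a va) (F b vb)) (\big[op/idx]_(j | (j != a) && (j != b)) F j (y j)).
Proof.
move=> ab; rewrite (bigD2 _ _ ab) upd2_first upd2_second //; congr (op _ _).
by apply: eq_bigr => j /andP[ja jb]; rewrite upd2_other.
Qed.

Lemma expect_merge y a b (G : ('I_m -> R) -> R) :
  expect (dr_merge y (Some a) (Some b)) (fun z => G z.1)
    = pair_mean (y a) (y b) (fun va vb => G (upd2 y a va b vb)).
Proof.
by rewrite /expect /dr_merge /pair_mean; case: ifP => _; rewrite !big_cons big_nil addr0.
Qed.

Lemma Forall_merge y a b : Defs.frac (y a) -> Defs.frac (y b) ->
  List.Forall (fun z => 0 <= z.1 /\ exists va vb,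
      [/\ z.2 = (upd2 y a va b vb, promote (upd2 y a va b vb) a b),
          va + vb = y a + y b, 0 <= va <= 1, 0 <= vb <= 1
        & ~~ (Defs.frac va && Defs.frac vb)])
    (dr_merge y (Some a) (Some b)).
Proof.
move=> fa fb; have [p01 q01] := pair_weights fa fb.
have [a0 a1] := andP fa; have [b0 b1] := andP fb.
have in01 (v : R) : 0 <= v -> v <= 1 -> 0 <= v <= 1 by move=> *; apply/andP.
rewrite /dr_merge; case: ifPn => [hs|]; [|rewrite -ltNge => hs];
  repeat constructor; rewrite /= ?subr_ge0; try by [case/andP: p01 | case/andP: q01].
- by exists (y a + y b), 0; split; rewrite ?addr0 ?lexx ?ler01 //;
    [apply: in01; lra | rewrite /Defs.frac ltxx andbF].
- by exists 0, (y a + y b); split; rewrite ?add0r ?lexx ?ler01 //;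
    [apply: in01; lra | rewrite /Defs.frac ltxx].
- by exists 1, (y a + y b - 1); split; rewrite ?lexx ?ler01 //;
    [ring | apply: in01; lra | rewrite /Defs.frac ltxx andbF].
- by exists (y a + y b - 1), 1; split; rewrite ?lexx ?ler01 //;
    [ring | apply: in01; lra | rewrite /Defs.frac ltxx !andbF].
Qed.

(* [(w, y', cs)]: weight, values and still fractional (carried) variables of
   an outcome of DR run from [y] on a subtree with leaves [L]. *)
Record dr_invariant (L : seq 'I_m) y (w : R) y' (cs : seq 'I_m) : Prop := {
  inv_weight : 0 <= w;
  inv_range : forall j, 0 <= y' j <= 1;
  inv_outside : forall j, j \notin L -> y' j = y j;
  inv_integral : forall j, ~~ Defs.frac (y j) -> y' j = y j;
  inv_carried : forall a, a \in cs -> (a \in L) && Defs.frac (y' a);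
  inv_settled : forall j, j \in L -> j \notin cs -> ~~ Defs.frac (y' j);
  inv_uniq : uniq cs;
  inv_sum : \sum_j y' j = \sum_j y j }.

Lemma invariant_leaf y i : (forall j, 0 <= y j <= 1) ->
  dr_invariant [:: i] y 1 y (seq_of_opt (if Defs.frac (y i) then Some i else None)).
Proof.
move=> y01; split => //; last by case: ifP.
- by case: ifP => fi a //= ain; rewrite ain; move: ain; rewrite inE => /eqP ->.
- move=> j; rewrite inE => /eqP ->.
  by case: ifP; rewrite /= ?inE ?eqxx.
Qed.

Lemma invariant_cat l r y w1 y1 cs1 w2 y2 cs2 : uniq (l ++ r) ->
  dr_invariant l y w1 y1 cs1 -> dr_invariant r y1 w2 y2 cs2 ->
  dr_invariant (l ++ r) y (w1 * w2) y2 (cs1 ++ cs2).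
Proof.
rewrite cat_uniq => /and3P[_ lr _] I1 I2.
have notr j : j \in l -> j \notin r.
  by move=> jl; apply: contra lr => jr; apply/hasP; exists j.
have keep j : j \in l -> y2 j = y1 j by move/notr/(inv_outside I2).
split.
- by rewrite mulr_ge0 ?(inv_weight I1) ?(inv_weight I2).
- exact: inv_range I2.
- move=> j; rewrite mem_cat negb_or => /andP[jl jr].
  by rewrite (inv_outside I2 jr) (inv_outside I1 jl).
- move=> j nfj; have e1 := inv_integral I1 nfj.
  by rewrite (inv_integral I2) e1.
- move=> a; rewrite !mem_cat => /orP[ac|ac].
    by have /andP[al fa] := inv_carried I1 ac; rewrite al keep.
  by have /andP[ar fa] := inv_carried I2 ac; rewrite ar orbT.
- move=> j; rewrite !mem_cat negb_or => /orP[jl|jr] /andP[j1 j2].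
    by rewrite keep //; apply: (inv_settled I1).
  exact: (inv_settled I2).
- rewrite cat_uniq (inv_uniq I1) (inv_uniq I2) andbT /=.
  apply/hasPn => a /(inv_carried I2) /andP[ar _].
  by apply/negP => /(inv_carried I1) /andP[/notr]; rewrite ar.
- by rewrite (inv_sum I2) (inv_sum I1).
Qed.

Lemma invariant_upd2 L y w y' a b va vb p :
  dr_invariant L y w y' [:: a; b] -> 0 <= p ->
  va + vb = y' a + y' b -> 0 <= va <= 1 -> 0 <= vb <= 1 ->
  ~~ (Defs.frac va && Defs.frac vb) ->
  dr_invariant L y (w * p) (upd2 y' a va b vb)
    (seq_of_opt (promote (upd2 y' a va b vb) a b)).
Proof.
move=> I p0 sv va01 vb01 nf.
have ab : a != b by have := inv_uniq I; rewrite /= inE andbT.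
have /andP[aL fa] := inv_carried I (mem_head a [:: b]).
have /andP[bL fb] : (b \in L) && Defs.frac (y' b).
  by apply: (inv_carried I); rewrite !inE eqxx orbT.
have frac_y c : Defs.frac (y' c) -> Defs.frac (y c).
  move=> fc; apply/negPn/negP => nfc.
  by move: fc; rewrite (inv_integral I nfc) (negbTE nfc).
split; last 2 first.
- by case: (promote _ _ _).
- by rewrite (big_upd2 _ (fun _ v => v)) //= sv -(bigD2 _ _ ab) (inv_sum I).
all: rewrite /promote ?upd2_first ?upd2_second //.
- by rewrite mulr_ge0 // (inv_weight I).
- move=> j; case: (eqVneq j a) => [->|ja]; first by rewrite upd2_first.
  case: (eqVneq j b) => [->|jb]; first by rewrite upd2_second.
  by rewrite upd2_other // (inv_range I).
- move=> j jL; rewrite upd2_other ?(inv_outside I) //.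
    by apply: contraNneq jL => ->.
  by apply: contraNneq jL => ->.
- move=> j nfj; rewrite upd2_other ?(inv_integral I) //.
    by apply: contraNneq nfj => ->; exact: frac_y.
  by apply: contraNneq nfj => ->; exact: frac_y.
- move=> c; case: ifP => [fva|_].
    by rewrite mem_seq1 => /eqP ->; rewrite aL upd2_first.
  by case: ifP => [fvb|//]; rewrite mem_seq1 => /eqP ->; rewrite bL upd2_second.
- move=> j jL; case: (eqVneq j a) => [->|ja].
    by rewrite upd2_first; case: ifP; rewrite /= ?inE ?eqxx.
  case: (eqVneq j b) => [->|jb].
    rewrite upd2_second //; case: ifP => [fva _|_]; first by move: nf; rewrite fva.
    by case: ifP; rewrite /= ?inE ?eqxx.
  rewrite upd2_other // => _; apply: (inv_settled I jL).
  by rewrite !inE negb_or ja jb.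
Qed.

Lemma Forall_merge_invariant L y w y' ca cb :
  dr_invariant L y w y' (seq_of_opt ca ++ seq_of_opt cb) ->
  List.Forall (fun z => dr_invariant L y (w * z.1) z.2.1 (seq_of_opt z.2.2))
    (dr_merge y' ca cb).
Proof.
case: ca cb => [a|] [b|] I; try by constructor => //; rewrite mulr1.
have /andP[_ fa] := inv_carried I (mem_head a [:: b]).
have /andP[_ fb] : (b \in L) && Defs.frac (y' b).
  by apply: (inv_carried I); rewrite !inE eqxx orbT.
apply: List.Forall_impl (Forall_merge fa fb) => -[p [y'' c]] /=.
by move=> [p0 [va [vb [[-> ->] sv va01 vb01 nf]]]]; exact: invariant_upd2.
Qed.

Lemma Forall_dr_invariant (T : btree m) y :
  uniq (leaves T) -> (forall j, 0 <= y j <= 1) ->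
  List.Forall (fun z => dr_invariant (leaves T) y z.1 z.2.1 (seq_of_opt z.2.2))
    (dr T y).
Proof.
elim: T y => [i|l IHl r IHr] y /= u y01.
  by constructor => //; exact: invariant_leaf.
have [ul ur] : uniq (leaves l) /\ uniq (leaves r).
  by move: u; rewrite cat_uniq => /and3P[].
apply: Forall_dbind; apply: List.Forall_impl (IHl y ul y01) => -[w1 [y1 ca]] /= I1.
apply: Forall_dbind; apply: List.Forall_impl (IHr y1 ur (inv_range I1)).
move=> -[w2 [y2 cb]] /= I2.
apply: List.Forall_impl (Forall_merge_invariant (invariant_cat u I1 I2)) => z.
by rewrite mulrA.
Qed.

Lemma expect_merge_mass y ca cb : expect (dr_merge y ca cb) (fun=> 1) = 1.
Proof.
case: ca cb => [a|] [b|]; rewrite /expect /dr_merge /=; try case: ifP => _;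
  rewrite ?big_cons ?big_nil /=; ring.
Qed.

Lemma dr_mass (T : btree m) y : expect (dr T y) (fun=> 1) = 1.
Proof.
elim: T y => [i|l IHl r IHr] y /=; first by rewrite expect_ret.
rewrite expect_bind -[RHS](IHl y); apply: eq_expect => p.
by rewrite expect_bind -[RHS](IHr p.1); apply: eq_expect => q; exact: expect_merge_mass.
Qed.

Section ProductSupermartingale.
Variable psi : 'I_m -> R -> R.
Hypothesis psi_ge0 : forall j v, 0 <= v <= 1 -> 0 <= psi j v.
Hypothesis psi_pair : forall a b, a != b -> forall x z, Defs.frac x -> Defs.frac z ->
  pair_mean x z (fun u v => psi a u * psi b v) <= psi a x * psi b z.

Lemma expect_merge_prod L y0 w y ca cb :
  dr_invariant L y0 w y (seq_of_opt ca ++ seq_of_opt cb) ->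
  expect (dr_merge y ca cb) (fun z => \prod_j psi j (z.1 j)) <= \prod_j psi j (y j).
Proof.
case: ca cb => [a|] [b|] I; try by rewrite /= expect_ret.
have ab : a != b by have := inv_uniq I; rewrite /= inE andbT.
have /andP[_ fa] := inv_carried I (mem_head a [:: b]).
have /andP[_ fb] : (b \in L) && Defs.frac (y b).
  by apply: (inv_carried I); rewrite !inE eqxx orbT.
rewrite (@expect_merge y a b (fun y' => \prod_j psi j (y' j))).
under eq_pair_mean do rewrite (big_upd2 _ psi _ _ _ ab).
rewrite pair_meanMr (bigD2 _ _ ab) ler_wpM2r ?psi_pair //.
by apply: prodr_ge0 => j _; apply/psi_ge0/(inv_range I).
Qed.

Lemma dr_prod_super (T : btree m) y :
  uniq (leaves T) -> (forall j, 0 <= y j <= 1) ->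
  expect (dr T y) (fun z => \prod_j psi j (z.1 j)) <= \prod_j psi j (y j).
Proof.
elim: T y => [i|l IHl r IHr] y /= u y01; first by rewrite expect_ret.
have [ul ur] : uniq (leaves l) /\ uniq (leaves r).
  by move: u; rewrite cat_uniq => /and3P[].
rewrite expect_bind; apply: le_trans (IHl y ul y01).
apply: ler_expect; apply: List.Forall_impl (Forall_dr_invariant ul y01).
move=> -[w1 [y1 ca]] /= I1; split; first exact: inv_weight I1.
rewrite expect_bind; apply: le_trans (IHr y1 ur (inv_range I1)).
apply: ler_expect; apply: List.Forall_impl (Forall_dr_invariant ur (inv_range I1)).
move=> -[w2 [y2 cb]] /= I2; split; first exact: inv_weight I2.
exact: expect_merge_prod (invariant_cat u I1 I2).
Qed.

End ProductSupermartingale.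

Lemma nfrac_eq01 (v : R) : 0 <= v <= 1 -> ~~ Defs.frac v -> v = (v == 1)%:R.
Proof.
move=> /andP[v0 v1]; rewrite /Defs.frac negb_and -!leNgt => /orP[h|h].
  have -> : v = 0 by apply/eqP; rewrite eq_le h v0.
  by rewrite eq_sym oner_eq0.
have -> : v = 1 by apply/eqP; rewrite eq_le h v1.
by rewrite eqxx.
Qed.

Lemma sum_frac_neq_nat y a (k : nat) : Defs.frac (y a) ->
  (forall j, j != a -> y j = (y j == 1)%:R) -> \sum_j y j != k%:R.
Proof.
move=> /andP[ya0 ya1] int01; rewrite (bigD1 a) //=.
rewrite (eq_bigr (fun j => (y j == 1)%:R)) -?natr_sum; last by move=> j /int01.
set n := (\sum_(j | j != a) _)%N; apply/eqP => e.
have ya : y a = k%:R - n%:R by rewrite -e addrK.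
case: (leqP n k) => nk.
  by move: ya0 ya1; rewrite ya -natrB // ltr0n ltrn1; lia.
by move: ya0; rewrite ya subr_gt0 ltr_nat; lia.
Qed.

Lemma Forall_dr_final (T : btree m) y (k : nat) :
  perm_eq (leaves T) (enum 'I_m) -> (forall j, 0 <= y j <= 1) ->
  \sum_j y j = k%:R ->
  List.Forall (fun z => [/\ 0 <= z.1, forall j, z.2.1 j = (z.2.1 j == 1)%:R
                         & forall j, y j = 0 -> z.2.1 j = 0]) (dr T y).
Proof.
move=> pe y01 sk.
have u : uniq (leaves T) by rewrite (perm_uniq pe) enum_uniq.
have inT j : j \in leaves T by rewrite (perm_mem pe) mem_enum.
apply: List.Forall_impl (Forall_dr_invariant u y01) => -[w [y' c]] /= I.
have int01 j : j \notin seq_of_opt c -> y' j = (y' j == 1)%:R.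
  by move=> jc; apply: nfrac_eq01 (inv_range I j) (inv_settled I (inT j) jc).
have nc : c = None.
  case: c I int01 => // a I int01; have /andP[_ fa] := inv_carried I (mem_head a [::]).
  have int_other j : j != a -> y' j = (y' j == 1)%:R.
    by move=> ja; apply: int01; rewrite /= inE.
  by move: (sum_frac_neq_nat k fa int_other); rewrite (inv_sum I) sk eqxx.
split => [|j|j yj0]; first exact: inv_weight I.
  by apply: int01; rewrite nc.
by rewrite (inv_integral I) // yj0 /Defs.frac ltxx.
Qed.

Lemma dr_mean_ge (T : btree m) y a :
  uniq (leaves T) -> (forall j, 0 <= y j <= 1) ->
  y a <= expect (dr T y) (fun z => z.1 a).
Proof.
move=> u y01; set w : R := 2^-1.
have w01 : 0 <= w < 1 by rewrite /w; apply/andP; split; lra.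
pose psi j := factor w (if j == a then KLin else KOne).
have psi_ge0 j v : 0 <= v <= 1 -> 0 <= psi j v by move=> v01; apply: factor_ge0.
have psi_pair b c : b != c -> forall x z, Defs.frac x -> Defs.frac z ->
    pair_mean x z (fun u v => psi b u * psi c v) <= psi b x * psi c z.
  move=> _ x z fx fz; apply: pair_mean_factorM => //.
  by case: (b == a); case: (c == a); case.
have psi_lin z : \prod_j psi j (z j) = lin w (z a).
  by rewrite (bigD1 a) //= /psi eqxx big1 ?mulr1 // => j /negbTE ->.
have := dr_prod_super psi_ge0 psi_pair u y01.
rewrite psi_lin (eq_expect _ (fun z => psi_lin z.1)) /lin.
by rewrite (expectB _ (fun=> 1)) expectZ dr_mass /w; lra.
Qed.

End DependentRounding.

Lemma exists_crossing (f : nat -> nat) n r : (f 0 < r <= f n)%N ->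
  exists2 p, (p < n)%N & (f p < r <= f p.+1)%N.
Proof.
elim: n => [|n IH] /andP[f0 fn]; first lia.
case: (leqP r (f n)) => rn; last by exists n => //; rewrite rn.
have [|p pn fp] := IH; first by rewrite f0 rn.
by exists p => //; lia.
Qed.

Section Blocks.
Variables (m : nat) (sigma : {perm 'I_m}) (nn : 'I_m -> nat).
Local Notation sub := (sub_block sigma nn).

Definition position (a : 'I_m) : nat := (sigma^-1)%g a.
Definition offset (p : nat) : nat := \sum_(q < m | (q < p)%N) nn (sigma q).

Lemma mem_sub_block a x :
  (x \in sub a) = (offset (position a) < x <= offset (position a) + nn a)%N.
Proof. by rewrite /sub_block mem_iota addSn ltnS. Qed.

Lemma sum_position_lt p : (\sum_(a | (position a < p)%N) nn a)%N = offset p.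
Proof.
rewrite /offset (reindex_inj (@perm_inj _ sigma)) /=.
by apply: eq_bigl => q; rewrite /position permK.
Qed.

Lemma offset_le a p : (position a < p)%N -> (offset (position a) + nn a <= offset p)%N.
Proof.
move=> ap; rewrite -!sum_position_lt [X in (_ <= X)%N](bigD1 a) //= addnC leq_add2l.
rewrite [X in (X <= _)%N]big_mkcond [X in (_ <= X)%N]big_mkcond /=.
apply: leq_sum => b _; case: ifP => // bp; rewrite ifT //.
by rewrite (ltn_trans bp ap); apply: contraTneq bp => ->; rewrite ltnn.
Qed.

Lemma sub_block_disjoint a b x : a != b -> x \in sub a -> x \notin sub b.
Proof.
move=> ab; rewrite !mem_sub_block => /andP[a1 a2]; apply/negP => /andP[b1 b2].
case: (ltngtP (position a) (position b)) => [ab'|ba|/val_inj/perm_inj eab].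
- by have := offset_le ab'; lia.
- by have := offset_le ba; lia.
- by move: ab; rewrite eab eqxx.
Qed.

Lemma exists_sub_block r : (0 < r <= \sum_a nn a)%N -> exists a, r \in sub a.
Proof.
move=> r01.
have [p pm /andP[p1 p2]] : exists2 p, (p < m)%N & (offset p < r <= offset p.+1)%N.
  apply: exists_crossing; have -> : offset 0 = 0%N by rewrite /offset big1.
  rewrite -sum_position_lt (eq_bigl xpredT) // => a; exact: ltn_ord.
exists (sigma (Ordinal pm)); rewrite mem_sub_block /position permK /= p1 /=.
move: p2; rewrite /offset (bigD1 (Ordinal pm)) ?ltnSn //= addnC.
by rewrite (eq_bigl (fun q : 'I_m => (q < p)%N)) // => q; rewrite ltnS ltn_neqAle andbC.
Qed.

Lemma card_le_prefix (P : pred 'I_m) (s : seq nat) r :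
  (forall a, P a -> exists2 x, x \in s & (x \in sub a) && (0 < x < r)%N) ->
  (#|P| <= \sum_(1 <= r' < r) Zv r' s)%N.
Proof.
move=> H; rewrite -sum1_card.
apply: (@leq_trans (\sum_(a in P) \sum_(1 <= r' < r) ((r' \in s) && (r' \in sub a)))).
  apply: leq_sum => a /H [x xs /andP[xa xr]].
  by rewrite (bigD1_seq x) ?mem_index_iota ?iota_uniq //= xs xa.
rewrite exchange_big /=; apply: leq_sum => r' _; rewrite /Zv.
case: (r' \in s); last by rewrite big1.
rewrite (eq_bigr (fun a => if r' \in sub a then 1 else 0)%N) -?big_mkcondr ?sum1dep_card;
  last by move=> a _; case: (r' \in sub a).
apply/card_le1_eqP => a b; rewrite !inE => /andP[_ ra] /andP[_ rb].
by apply/eqP/negPn/negP => ba; move: (sub_block_disjoint ba rb); rewrite ra.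
Qed.

End Blocks.

Lemma Zv_eq1 r s : (Zv r s == 1%N) = (r \in s).
Proof. by rewrite /Zv; case: (r \in s). Qed.

Lemma sumr_eq_mem (R : realType) (s : seq nat) x :
  uniq s -> \sum_(r <- s) ((x == r)%:R : R) = (x \in s)%:R.
Proof.
elim: s => [|y s IH] /=; first by rewrite big_nil.
move=> /andP[ys us]; rewrite big_cons IH // inE; case: eqP => [->|_] /=.
  by rewrite (negbTE ys) addr0.
by rewrite add0r.
Qed.

Section ZGivenY.
Variables (R : realType) (m : nat) (sigma : {perm 'I_m}) (nn : 'I_m -> nat).
Variable Y : 'I_m -> R.
Local Notation sub := (sub_block sigma nn).

Definition zdist_seq (L : seq 'I_m) : dist R (seq nat) :=
  foldr (fun i d =>
           if Y i == 1 then
             dbind d (fun s => [seq (((nn i)%:R)^-1, r :: s) | r <- sub i])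
           else d)
        (dret R [::]) L.

Definition ones_before (i : 'I_m) : pred 'I_m :=
  [pred a | (position sigma a < position sigma i)%N && (Y a == 1)].

Lemma zdistE : zdist sigma nn Y = zdist_seq (enum 'I_m).
Proof. by []. Qed.

Lemma Forall_zdist_seq L : List.Forall (fun z => 0 <= z.1 /\
    (forall x, x \in z.2 -> exists2 a, (a \in L) && (Y a == 1) & x \in sub a) /\
    (forall a, a \in L -> Y a == 1 -> exists2 x, x \in z.2 & x \in sub a))
  (zdist_seq L).
Proof.
elim: L => [|i L IH] /=; first by constructor => //; split => //; split.
case: ifP => Yi; last first.
  apply: List.Forall_impl IH => -[w s] /= [w0 [sY Ys]]; split => //; split.
    by move=> x /sY [a /andP[aL Ya] xa]; exists a; rewrite ?inE ?aL ?orbT.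
  by move=> a; rewrite inE => /orP[/eqP ->|aL] Ya; [rewrite Yi in Ya | exact: Ys].
apply: Forall_dbind; apply: List.Forall_impl IH => -[w s] /= [w0 [sY Ys]].
apply/List.Forall_map; apply: Forall_mem => r ri /=.
split; first by rewrite mulr_ge0 // invr_ge0.
split.
  move=> x; rewrite inE => /orP[/eqP ->|xs]; first by exists i; rewrite ?mem_head ?Yi.
  by have [a /andP[aL Ya] xa] := sY x xs; exists a; rewrite ?inE ?aL ?orbT.
move=> a; rewrite inE => /orP[/eqP ->|aL] Ya; first by exists r; rewrite ?mem_head.
by have [x xs xa] := Ys a aL Ya; exists x; rewrite // inE xs orbT.
Qed.

Lemma expect_block i s (F : seq nat -> R) :
  expect [seq (((nn i)%:R)^-1, r :: s) | r <- sub i] F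
    = ((nn i)%:R)^-1 * \sum_(r <- sub i) F (r :: s).
Proof. by rewrite /expect big_map mulr_sumr. Qed.

Hypothesis nn_gt0 : forall a, Y a == 1 -> (0 < nn a)%N.

Lemma zdist_seq_mass L : expect (zdist_seq L) (fun=> 1) = 1.
Proof.
elim: L => [|i L IH] /=; first by rewrite expect_ret.
case: ifP => Yi //; rewrite expect_bind -[RHS]IH; apply: eq_expect => s.
rewrite expect_block big_const_seq count_predT size_iota iter_addr_0 mulVf //.
by rewrite pnatr_eq0 -lt0n nn_gt0.
Qed.

Lemma expect_zdist_seq_cst L c : expect (zdist_seq L) (fun=> c) = c.
Proof.
rewrite -[c in RHS]mulr1 -(zdist_seq_mass L) -expectZ.
by apply: eq_expect => s; rewrite mulr1.
Qed.

Lemma expect_zdist_seq_mem L x : uniq L ->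
  expect (zdist_seq L) (fun s => (x \in s)%:R)
    = \sum_(a <- L) (Y a == 1)%:R * (x \in sub a)%:R / (nn a)%:R.
Proof.
elim: L => [|i L IH] /=; first by rewrite expect_ret big_nil.
move=> /andP[iL uL]; rewrite big_cons; case: ifP => Yi; last by rewrite IH // !mul0r add0r.
have n0 : (nn i)%:R != 0 :> R by rewrite pnatr_eq0 -lt0n nn_gt0.
rewrite -IH // mul1r -(expect_zdist_seq_cst L ((x \in sub i)%:R / (nn i)%:R)).
rewrite -expectD expect_bind.
apply: eq_expect_supp; apply: List.Forall_impl (Forall_zdist_seq L) => -[w s] /= [_ [sY _]].
have split_mem r : r \in sub i -> ((x \in r :: s)%:R : R) = (x == r)%:R + (x \in s)%:R.
  move=> ri; rewrite inE; case: eqP => [xr|] /=; last by rewrite add0r.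
  case: (boolP (x \in s)) => xs; last by rewrite addr0.
  have [a /andP[aL _] xa] := sY x xs; have ai : a != i by apply: contraNneq iL => <-.
  by move: (sub_block_disjoint ai xa); rewrite xr ri.
rewrite expect_block (eq_big_seq _ split_mem) big_split /= sumr_eq_mem ?iota_uniq //.
by rewrite big_const_seq count_predT size_iota iter_addr_0; field.
Qed.

Lemma expect_zdist_mem i r : r \in sub i ->
  expect (zdist sigma nn Y) (fun s => (r \in s)%:R) = (Y i == 1)%:R / (nn i)%:R.
Proof.
move=> ri; rewrite zdistE (expect_zdist_seq_mem _ (enum_uniq _)) big_enum /=.
rewrite (bigD1 i) //= ri mulr1 big1 ?addr0 // => a ai.
by rewrite (negbTE (sub_block_disjoint _ ri)) ?mulr0 ?mul0r // eq_sym.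
Qed.

Lemma expect_zdist_prefix i r t : r \in sub i ->
  expect (zdist sigma nn Y)
    (fun s => ((\sum_(1 <= r' < r) Zv r' s <= t)%N && (Zv r s == 1%N))%:R)
  <= (#|ones_before i| <= t)%N%:R
     * ((Y i == 1)%:R / (nn i)%:R).
Proof.
move=> ri; rewrite -(expect_zdist_mem ri) -expectZ zdistE.
apply: ler_expect; apply: List.Forall_impl (Forall_zdist_seq _) => -[w s] /= [w0 [_ Ys]].
split => //; rewrite Zv_eq1; case: (boolP (r \in s)) => rs; last by rewrite andbF mulr0.
rewrite andbT mulr1.
case: (leqP (\sum_(1 <= r' < r) Zv r' s) t) => pref /=; last exact: ler0n.
suff -> : (#|ones_before i| <= t)%N by [].
apply: leq_trans pref; apply: (@card_le_prefix _ sigma nn) => a /andP[ai Ya].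
have [x xs xa] := Ys a (mem_enum _ a) Ya; exists x => //; rewrite xa /=.
by move: xa ri; rewrite !mem_sub_block; have := offset_le nn ai; lia.
Qed.

End ZGivenY.

Section ChernoffBound.
Variable R : realType.

Definition chernoff (t : nat) (x : R) : R := expR (- x) * (expR 1 * x / t%:R) ^+ t.

Lemma chernoff_ge0 t x : 0 <= x -> 0 <= chernoff t x.
Proof.
move=> x0; apply: mulr_ge0; first exact: expR_ge0.
by apply/exprn_ge0/divr_ge0; [apply: mulr_ge0 => //; exact: expR_ge0 | exact: ler0n].
Qed.

(* [(mu / x) ^ t <= e ^ (t (mu / x - 1)) <= e ^ (mu - x)], the last step as [t <= x]. *)
Lemma chernoff_antimono t x mu : (0 < t)%N -> t%:R <= x -> x <= mu ->
  chernoff t mu <= chernoff t x.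
Proof.
move=> t0 tx xmu; have t0' : 0 < t%:R :> R by rewrite ltr0n.
have x0 : 0 < x by lra.
rewrite /chernoff; have -> : expR 1 * mu / t%:R = (expR 1 * x / t%:R) * (mu / x).
  by field; rewrite !gt_eqF.
have c0 : 0 <= (expR 1 * x / t%:R) ^+ t.
  by rewrite exprn_ge0 // divr_ge0 ?ler0n // mulr_ge0 ?expR_ge0 ?ltW.
rewrite exprMn mulrCA [X in _ <= X]mulrC ler_wpM2l //.
have ratio : (mu / x) ^+ t <= expR (t%:R * (mu / x - 1)).
  rewrite expRM_natl; apply: lerXn2r; rewrite ?nnegrE ?expR_ge0 //.
    by apply: divr_ge0; lra.
  by have := expR_ge1Dx (mu / x - 1); rewrite addrCA subrr addr0.
apply: le_trans (ler_wpM2l (expR_ge0 _) ratio) _; rewrite -expRD ler_expR.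
have : t%:R * (mu / x - 1) <= mu - x.
  rewrite (_ : t%:R * (mu / x - 1) = t%:R * (mu - x) / x); last by field; rewrite gt_eqF.
  by rewrite ler_pdivrMr //; nra.
lra.
Qed.

Lemma prod_lin_le_expR (I : finType) (P : pred I) (y : I -> R) w :
  0 <= w <= 1 -> (forall a, P a -> 0 <= y a <= 1) ->
  \prod_(a | P a) lin w (y a) <= expR (- (w * \sum_(a | P a) y a)).
Proof.
move=> w01 y01; rewrite mulr_sumr -sumrN expR_sum; apply: ler_prod => a Pa.
by rewrite lin_ge0 ?y01 //; exact: expR_ge1Dx.
Qed.

Lemma cap_expR_le_chernoff (t : nat) (y0 x mu : R) : (0 < t)%N -> 0 < y0 <= 1 ->
  t%:R <= x -> x <= mu ->
  cap (1 - t%:R / mu) y0 * expR (- ((1 - t%:R / mu) * (mu - y0)))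
    <= (t%:R / mu) ^+ t.-1 * y0 * chernoff t x.
Proof.
move=> t0 /andP[y00 y01] tx xmu; have t0' : 0 < t%:R :> R by rewrite ltr0n.
have mu0 : 0 < mu by lra.
set q := t%:R / mu; set w := 1 - q.
have q0 : 0 < q by rewrite divr_gt0.
apply: le_trans (ler_wpM2l _ (chernoff_antimono t0 tx xmu)); last first.
  by rewrite mulr_ge0 ?exprn_ge0 // ltW.
have cap_le : cap w y0 <= y0 * lin w y0 / q.
  by rewrite /cap ge_min /quad (_ : 1 - w = q) ?lexx // /w; ring.
have lin_expR : lin w y0 * expR (w * y0) <= 1.
  have := ler_wpM2r (expR_ge0 (w * y0)) (expR_ge1Dx (- (w * y0))).
  by rewrite -expRD addNr expR0.
set C := expR (- mu) * expR 1 ^+ t.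
have -> : expR (- (w * (mu - y0))) = expR (w * y0) * C.
  rewrite /C -expRM_natl mulr1 -!expRD; congr expR.
  by rewrite /w /q; field; rewrite gt_eqF.
have -> : q ^+ t.-1 * y0 * chernoff t mu = y0 / q * C.
  have qt : q ^+ t = q ^+ t.-1 * q by rewrite -exprSr prednK.
  rewrite /chernoff /C (_ : expR 1 * mu / t%:R = expR 1 / q); last first.
    by rewrite /q; field; rewrite !gt_eqF.
  by rewrite (expr_div_n (expR 1)) qt; field; rewrite !gt_eqF ?exprn_gt0.
have C0 : 0 <= C by rewrite mulr_ge0 ?exprn_ge0 ?expR_ge0.
apply: le_trans (ler_wpM2r (mulr_ge0 (expR_ge0 _) C0) cap_le) _.
rewrite (_ : _ * (_ * C) = y0 / q * C * (lin w y0 * expR (w * y0))); last by ring.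
by rewrite ler_piMr // mulr_ge0 // divr_ge0 ?ltW.
Qed.

End ChernoffBound.

Section Client.
Variables (R : realType) (m : nat) (T : btree m) (ystar : 'I_m -> R).
Variables (sigma : {perm 'I_m}) (nn : 'I_m -> nat) (N K : nat).
Hypothesis leavesT : perm_eq (leaves T) (enum 'I_m).
Hypothesis ystar01 : forall i, 0 <= ystar i <= 1.
Hypothesis sum_ystar : \sum_i ystar i = K%:R.
Hypothesis N_gt0 : (0 < N)%N.
Hypothesis ystarE : forall i, ystar i = (nn i)%:R / N%:R.
Local Notation sub := (sub_block sigma nn).

Lemma uniq_leavesT : uniq (leaves T).
Proof. by rewrite (perm_uniq leavesT) enum_uniq. Qed.

Lemma sum_nn : (\sum_i nn i)%N = (K * N)%N.
Proof.
apply/eqP; rewrite -(eqr_nat R) natr_sum natrM -sum_ystar mulr_suml; apply/eqP.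
by apply: eq_bigr => i _; rewrite ystarE divfK // pnatr_eq0 -lt0n.
Qed.

Lemma nn_gt0_of_sub i r : r \in sub i -> (0 < nn i)%N.
Proof. by rewrite mem_sub_block; lia. Qed.

Lemma Forall_dr_outcome : List.Forall (fun z =>
    [/\ 0 <= z.1, forall a, z.2.1 a = (z.2.1 a == 1)%:R
      & forall a, z.2.1 a == 1 -> (0 < nn a)%N]) (dr T ystar).
Proof.
apply: List.Forall_impl (Forall_dr_final leavesT ystar01 sum_ystar) => z [w0 Yint Y0].
split => // a; apply: contraTT; rewrite lt0n negbK => /eqP nn0.
have -> : z.2.1 a = 0 by apply: Y0; rewrite ystarE nn0 mul0r.
by rewrite eq_sym oner_eq0.
Qed.

Lemma prob_Z_eq1 i r : r \in sub i ->
  prob (Zdist T ystar sigma nn) (fun s => Zv r s == 1%N)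
    = expect (dr T ystar) (fun z => z.1 i) / (nn i)%:R.
Proof.
move=> ri; rewrite prob_expect expect_bind mulrC -expectZ.
apply: eq_expect_supp; apply: List.Forall_impl Forall_dr_outcome.
move=> -[w [Y _]] /= [_ Yint Ypos].
under eq_expect do rewrite Zv_eq1.
by rewrite (expect_zdist_mem Ypos ri) -Yint mulrC.
Qed.

Section Prefix.
Variables (i : 'I_m) (r t : nat).
Hypothesis ri : r \in sub i.
Hypothesis t_gt0 : (0 < t)%N.
Hypothesis tN_le_r : (t * N <= r)%N.

Let mu : R := (offset sigma nn (position sigma i) + nn i)%:R / N%:R.
Let q : R := t%:R / mu.
Let kind (a : 'I_m) : factor_kind :=
  if a == i then KCap else if (position sigma a < position sigma i)%N then KLin else KOne.
Let psi a := factor (1 - q) (kind a).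

Lemma t_le_rN_le_mu : (t%:R : R) <= r%:R / N%:R <= mu.
Proof.
have N0 : 0 < N%:R :> R by rewrite ltr0n.
rewrite ler_pdivlMr // -natrM ler_nat tN_le_r /= /mu ler_pM2r ?invr_gt0 // ler_nat.
by move: ri; rewrite mem_sub_block => /andP[].
Qed.

Lemma q_gt0_le1 : 0 < q <= 1.
Proof.
have [tx xmu] := andP t_le_rN_le_mu; have t0 : 0 < t%:R :> R by rewrite ltr0n.
have mu0 : 0 < mu by lra.
by rewrite divr_gt0 //= ler_pdivrMr // mul1r; lra.
Qed.

Lemma psi_ge0 a v : 0 <= v <= 1 -> 0 <= psi a v.
Proof. by have /andP[q0 q1] := q_gt0_le1; apply: factor_ge0; lra. Qed.

Lemma psi_pair a b : a != b -> forall x z, Defs.frac x -> Defs.frac z ->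
  pair_mean x z (fun u v => psi a u * psi b v) <= psi a x * psi b z.
Proof.
move=> ab x z fx fz; have /andP[q0 q1] := q_gt0_le1.
apply: pair_mean_factorM => //; first by apply/andP; split; lra.
rewrite /kind; case: eqVneq => [ai|_]; last by case: ifP => _ [].
by case: eqVneq => [bi|_]; [move: ab; rewrite ai bi eqxx | case: ifP => _ []].
Qed.

Lemma indicator_le_prod (Y : 'I_m -> R) : (forall a, Y a = (Y a == 1)%:R) ->
  ((Y i == 1) && (#|ones_before sigma Y i| <= t.-1)%N)%:R * q ^+ t.-1
    <= \prod_a psi a (Y a).
Proof.
move=> Yint; have /andP[q0 q1] := q_gt0_le1.
have Y01 a : 0 <= Y a <= 1 by rewrite Yint; case: (Y a == 1); rewrite ?lexx ?ler01.
case: (eqVneq (Y i) 1) => Yi /=; last by rewrite mul0r prodr_ge0 // => a _; apply: psi_ge0.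
have -> : \prod_a psi a (Y a) = q ^+ #|ones_before sigma Y i|.
  rewrite -prodr_const [RHS]big_mkcond /=; apply: eq_bigr => a _; rewrite /psi /kind inE.
  case: eqVneq => [->|_] /=; first by rewrite ltnn Yi cap1 //; lra.
  case: ifP => _ //=; rewrite /lin {1}(Yint a); case: (Y a == 1) => /=; ring.
case: leqP => cnt; last by rewrite mul0r exprn_ge0 // ltW.
by rewrite mul1r ler_wiXn2l // ?ltW // -subn1.
Qed.

Lemma prod_ystar_le :
  \prod_a psi a (ystar a) <= q ^+ t.-1 * ystar i * chernoff t (r%:R / N%:R).
Proof.
have /andP[q0 q1] := q_gt0_le1; have [tx xmu] := andP t_le_rN_le_mu.
have N0 : N%:R != 0 :> R by rewrite pnatr_eq0 -lt0n.
have y0 : 0 < ystar i <= 1.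
  by rewrite (andP (ystar01 i)).2 andbT ystarE divr_gt0 ?ltr0n // (nn_gt0_of_sub ri).
have -> : \prod_a psi a (ystar a)
    = cap (1 - q) (ystar i)
      * \prod_(a | (position sigma a < position sigma i)%N) lin (1 - q) (ystar a).
  rewrite (bigD1 i) //= /psi /kind eqxx; congr (_ * _).
  rewrite big_mkcond [RHS]big_mkcond; apply: eq_bigr => a _ /=.
  by case: eqVneq => [->|_] /=; [rewrite ltnn | case: ifP].
have sumS : \sum_(a | (position sigma a < position sigma i)%N) ystar a = mu - ystar i.
  under eq_bigr do rewrite ystarE.
  by rewrite -mulr_suml -natr_sum sum_position_lt /mu ystarE natrD; field.
apply: le_trans (cap_expR_le_chernoff t_gt0 y0 tx xmu).
rewrite -sumS ler_wpM2l ?prod_lin_le_expR //; last by apply/andP; split; lra.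
by apply: (@factor_ge0 _ _ KCap); [apply/andP; split; lra | exact: ystar01].
Qed.

Lemma prob_prefix_le :
  prob (Zdist T ystar sigma nn)
    (fun s => (\sum_(1 <= r' < r) Zv r' s <= t.-1)%N && (Zv r s == 1%N))
  <= ystar i * chernoff t (r%:R / N%:R) / (nn i)%:R.
Proof.
have /andP[q0 _] := q_gt0_le1; have Q0 : 0 < q ^+ t.-1 by rewrite exprn_gt0.
have nI0 : 0 < (nn i)%:R :> R by rewrite ltr0n (nn_gt0_of_sub ri).
have QnI0 : 0 <= (q ^+ t.-1 * (nn i)%:R)^-1 by rewrite invr_ge0 ltW // mulr_gt0.
rewrite prob_expect expect_bind.
apply: (@le_trans _ _ (expect (dr T ystar)
  (fun z => (q ^+ t.-1 * (nn i)%:R)^-1 * \prod_a psi a (z.1 a)))).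
  apply: ler_expect; apply: List.Forall_impl Forall_dr_outcome.
  move=> -[w [Y _]] /= [w0 Yint Ypos].
  split => //; apply: le_trans (expect_zdist_prefix Ypos t.-1 ri) _.
  rewrite -(ler_pM2l (mulr_gt0 Q0 nI0)) mulVKf; last by rewrite gt_eqF // mulr_gt0.
  set b := Y i == 1; set c := (#|ones_before sigma Y i| <= t.-1)%N.
  have -> : q ^+ t.-1 * (nn i)%:R * (c%:R * (b%:R / (nn i)%:R)) = (b && c)%:R * q ^+ t.-1.
    by rewrite -mulnb natrM; field; rewrite gt_eqF.
  exact: indicator_le_prod.
have super := dr_prod_super psi_ge0 psi_pair uniq_leavesT ystar01.
rewrite expectZ; apply: le_trans (ler_wpM2l QnI0 super) _.
apply: le_trans (ler_wpM2l QnI0 prod_ystar_le) _.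
rewrite [leLHS](_ : _ = ystar i * chernoff t (r%:R / N%:R) / (nn i)%:R) //.
by field; rewrite !gt_eqF.
Qed.

End Prefix.

Lemma condprob_le_chernoff r t : (0 < t)%N -> (t * N < r <= K * N)%N ->
  condprob (Zdist T ystar sigma nn)
    (fun s => (\sum_(1 <= r' < r) Zv r' s <= t.-1)%N) (fun s => Zv r s == 1%N)
  <= chernoff t (r%:R / N%:R).
Proof.
move=> t0 /andP[tr rK].
have [i ri] : exists i, r \in sub i.
  by apply: exists_sub_block; rewrite sum_nn rK andbT; lia.
have nI0 : 0 < (nn i)%:R :> R by rewrite ltr0n (nn_gt0_of_sub ri).
have y0 : 0 < ystar i by rewrite ystarE divr_gt0 ?ltr0n // (nn_gt0_of_sub ri).
have EY := @dr_mean_ge R m T ystar i uniq_leavesT ystar01.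
rewrite /condprob (prob_Z_eq1 ri) ler_pdivrMr; last by rewrite divr_gt0 //; lra.
apply: le_trans (prob_prefix_le ri t0 (ltnW tr)) _.
rewrite [X in _ <= X]mulrA ler_pM2r ?invr_gt0 // mulrC.
by apply: ler_wpM2l EY; rewrite chernoff_ge0 // divr_ge0 ?ler0n.
Qed.

End Client.

Unset Implicit Arguments.

Theorem lemma1 (R : realType) (n m k : nat)
    (c : 'I_m -> 'I_n -> R) (xstar : 'I_k -> 'I_m -> 'I_n -> R)
    (ystar : 'I_m -> R) (T : btree m) (j : 'I_n) (sigma : {perm 'I_m})
    (N : nat) (nn : 'I_m -> nat) :
  (forall i j', 0 <= c i j') ->
  (k <= m)%N ->
  lp_optimal c xstar ystar ->
  perm_eq (leaves T) (enum 'I_m) ->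
  (forall p q : 'I_m, (p <= q)%N -> c (sigma p) j <= c (sigma q) j) ->
  (0 < N)%N ->
  (forall i, ystar i = (nn i)%:R / N%:R) ->
  forall (ell t r : nat),
    (1 <= ell <= k)%N -> (1 <= t <= ell - 1)%N ->
    ((ell - 1) * N + 1 <= r <= ell * N)%N ->
    condprob (Zdist T ystar sigma nn)
      (fun s => (\sum_(1 <= r' < r) Zv r' s <= t - 1)%N)
      (fun s => Zv r s == 1%N)
    <= expR (- (r%:R / N%:R)) * (expR 1 * (r%:R / N%:R) / t%:R) ^+ t.
Proof.
move=> _ _ [[sum_y _ _ y01 _] _] leavesT _ N0 yE ell t r.
move=> /andP[_ lk] /andP[t1 tl] /andP[r1 r2]; rewrite subn1.
apply: (condprob_le_chernoff sigma leavesT y01 sum_y N0 yE t1); apply/andP; split.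
  by apply: leq_trans r1; rewrite addn1 ltnS leq_mul2r tl orbT.
by apply: leq_trans r2 _; rewrite leq_mul2r lk orbT.
Qed.
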